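(* Consider the Coxeter diagram $D$ with seven nodes $1,\dots,7$ forming the cycle $6-5-4-3-2-1-7-6$, with edge labels $m_{65}=4$, $m_{54}=4$, $m_{43}=6$, $m_{32}=4$, $m_{21}=\infty$, $m_{17}=4$, $m_{76}=6$, and all other pairs of nodes non-adjacent (i.e. $m_{ij}=2$). Then $D$ is the Coxeter diagram of a finite-volume hyperbolic Coxeter $4$-polytope $P_0$ which (a) has exactly one ideal vertex, and (b) has the property that whenever a bounded facet and an unbounded facet intersect, their dihedral angle is $\pi/(2k)$ for some $k\in\mathbb{N}$. Moreover, the horospherical link of the unique ideal vertex of $P_0$ is a Euclidean right prism over a triangle with inner angles $\pi/2,\pi/4,\pi/4$, and its Coxeter diagram is the subdiagram of $D$ spanned by the nodes $1,2,4,5,6$.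
   Context: A hyperbolic Coxeter polytope is a finite convex polytope in $\mathbb{H}^n$ all of whose dihedral angles are integral submultiples of $\pi$. Its Coxeter diagram has one node per bounding hyperplane; nodes $i,j$ are joined by an edge labelled $m_{ij}$ if the hyperplanes meet at dihedral angle $\pi/m_{ij}$, with label $\infty$ if they are tangent at infinity, no edge if $m_{ij}=2$, and a dashed edge if they are ultraparallel (there are no dashed edges in $D$). *)

From mathcomp Require Import all_boot all_order all_algebra.
From mathcomp Require Import all_classical all_reals all_analysis.
Set Implicit Arguments. Unset Strict Implicit. Unset Printing Implicit Defensive.
Import Order.TTheory GRing.Theory Num.Theory.
Import numFieldNormedType.Exports.
Local Open Scope classical_set_scope.
Local Open Scope ring_scope.

(* Hyperboloid model of H^4 in Minkowski space R^{4,1}.                      *)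
Section Hyperbolic.
Variable R : realType.
Implicit Types (x y v a b : 'rV[R]_5) (e : 'I_7 -> 'rV[R]_5).

Definition lor x y : R :=
  \sum_(k < 5) (if val k == 4%N then - 1 else 1) * x ord0 k * y ord0 k.

Definition H4 : set 'rV[R]_5 := [set x | lor x x = -1 /\ 0 < x ord0 (inord 4)].

(* representatives of the points of the ideal boundary (future light cone) *)
Definition ideal_bdry : set 'rV[R]_5 :=
  [set v | lor v v = 0 /\ 0 < v ord0 (inord 4)].

(* the polytope bounded by the hyperplanes e i^perp, with outward normals e i *)
Definition hpoly e : set 'rV[R]_5 := [set x | H4 x /\ forall i, lor x (e i) <= 0].

Definition facet e (i : 'I_7) : set 'rV[R]_5 := [set x | hpoly e x /\ lor x (e i) = 0].

(* hpoly e is a genuine 4-dimensional polytope and each hyperplane e i^perp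
   carries a genuine (3-dimensional) facet: the relative interior of the
   facet is nonempty. *)
Definition irredundant_polytope e : Prop :=
  (exists x, H4 x /\ forall i, lor x (e i) < 0) /\
  (forall i, exists x, H4 x /\ lor x (e i) = 0 /\
                       forall j, j != i -> lor x (e j) < 0).

Definition hyps_meet (f g : 'rV[R]_5) : Prop :=
  exists x, H4 x /\ lor x f = 0 /\ lor x g = 0.

Definition meet_at_angle (f g : 'rV[R]_5) (theta : R) : Prop :=
  hyps_meet f g /\ lor f g = - cos theta.

Definition tangent_at_infinity (f g : 'rV[R]_5) : Prop :=
  ~ hyps_meet f g /\ exists v, ideal_bdry v /\ lor v f = 0 /\ lor v g = 0.

(* Coxeter diagrams on 7 nodes: label Some m for dihedral angle pi/m
   (m = 2 means "no edge"), None for label infinity. *)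
Definition diagram7 := 'I_7 -> 'I_7 -> option nat.

Definition coxeter_polytope_with_diagram e (D : diagram7) : Prop :=
  (forall i, lor (e i) (e i) = 1) /\
  irredundant_polytope e /\
  (forall i j, i != j ->
     match D i j with
     | Some m => meet_at_angle (e i) (e j) (pi / m%:R)
     | None => tangent_at_infinity (e i) (e j)
     end).

Definition leb4 :=
  (((@lebesgue_measure R) \x (@lebesgue_measure R)) \x (@lebesgue_measure R)
     \x (@lebesgue_measure R))%E.

(* the point (y1,y2,y3,y4,1) of R^{4,1} over the point y of the Klein ball *)
Definition klein_lift (p : R * R * R * R) : 'rV[R]_5 :=
  \row_(k < 5) nth 1 [:: p.1.1.1; p.1.1.2; p.1.2; p.2] k.

Definition klein_set e : set (R * R * R * R) :=
  [set p | lor (klein_lift p) (klein_lift p) < 0 /\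
           forall i, lor (klein_lift p) (e i) <= 0].

(* hyperbolic volume density in the Klein model: (1 - |y|^2)^(-5/2) *)
Definition klein_density (p : R * R * R * R) : R :=
  (Num.sqrt ((- lor (klein_lift p) (klein_lift p)) ^+ 5))^-1.

Definition hvolume e : \bar R :=
  (\int[leb4]_(p in klein_set e) (klein_density p)%:E)%E.

Definition finite_volume e : Prop := (hvolume e < +oo)%E.

(* closure of hpoly e in the closed Klein ball (points normalized x5 = 1) *)
Definition klein_closure e : set 'rV[R]_5 :=
  [set x : 'rV[R]_5 | x ord0 (inord 4) = 1 /\ lor x x <= 0 /\ forall i, lor x (e i) <= 0].

Definition ideal_vertex e v : Prop :=
  klein_closure e v /\ lor v v = 0 /\
  forall a b (t : R), klein_closure e a -> klein_closure e b ->
    0 < t < 1 -> v = t *: a + (1 - t) *: b -> a = b.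

(* a subset of H^4 is bounded: cosh of the hyperbolic distance, -<x,y>,
   is bounded on it *)
Definition hbounded (S : set 'rV[R]_5) : Prop :=
  exists M : R, forall x y, S x -> S y -> - lor x y <= M.

Definition even_angles_bounded_unbounded e : Prop :=
  forall i j, hbounded (facet e i) -> ~ hbounded (facet e j) ->
    facet e i `&` facet e j !=set0 ->
    exists k : nat, (0 < k)%N /\ meet_at_angle (e i) (e j) (pi / (2 * k)%:R).

Definition horosphere v (c : R) : set 'rV[R]_5 := [set x | H4 x /\ lor x v = - c].

Definition edist3 (p q : 'rV[R]_3) : R :=
  Num.sqrt (\sum_(k < 3) (p ord0 k - q ord0 k) ^+ 2).

(* intrinsic (flat) distance of the horosphere: for x, y on a horosphere
   it equals 2 sinh(d(x,y)/2) = sqrt(<x-y,x-y>) *)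
Definition horo_dist x y : R := Num.sqrt (lor (x - y) (x - y)).

Definition c0 (p : 'rV[R]_3) := p ord0 (inord 0).
Definition c1 (p : 'rV[R]_3) := p ord0 (inord 1).
Definition c2 (p : 'rV[R]_3) := p ord0 (inord 2).

(* right prism of height h over the triangle with legs a, i.e. the triangle
   with angles pi/2, pi/4, pi/4 *)
Definition prism (a h : R) : set 'rV[R]_3 :=
  [set p | 0 <= c0 p /\ 0 <= c1 p /\ c0 p + c1 p <= a /\ 0 <= c2 p <= h].

(* The horospherical link of the ideal vertex v (cut by any sufficiently small
   horosphere) is, via an isometry of the horosphere onto E^3, the right prism
   over the (pi/2,pi/4,pi/4)-triangle; the link's facets are the traces of the
   facets 1,2,4,5,6 of the polytope (indices 0,1,3,4,5): nodes 1 and 2 give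
   the two triangular ends, nodes 4 and 6 the two legs, node 5 the hypotenuse
   face; facets 3 and 7 (indices 2, 6) do not meet the horosphere. *)
Definition link_is_prism e v : Prop :=
  exists cmax : R, 0 < cmax /\ forall c : R, 0 < c < cmax ->
  exists (f : 'rV[R]_5 -> 'rV[R]_3) (a h : R),
    (0 < a /\ 0 < h) /\
    (forall x y, horosphere v c x -> horosphere v c y ->
                 edist3 (f x) (f y) = horo_dist x y) /\
    f @` horosphere v c = setT /\
    f @` (horosphere v c `&` hpoly e) = prism a h /\
    f @` (horosphere v c `&` facet e (inord 0)) = prism a h `&` [set p | c2 p = 0] /\
    f @` (horosphere v c `&` facet e (inord 1)) = prism a h `&` [set p | c2 p = h] /\
    f @` (horosphere v c `&` facet e (inord 3)) = prism a h `&` [set p | c0 p = 0] /\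
    f @` (horosphere v c `&` facet e (inord 5)) = prism a h `&` [set p | c1 p = 0] /\
    f @` (horosphere v c `&` facet e (inord 4)) = prism a h `&` [set p | c0 p + c1 p = a] /\
    horosphere v c `&` facet e (inord 2) = set0 /\
    horosphere v c `&` facet e (inord 6) = set0.

End Hyperbolic.

(* The Coxeter diagram D of the paper; node k of the paper is index k-1:
   cycle 6-5-4-3-2-1-7-6 with m65 = 4, m54 = 4, m43 = 6, m32 = 4, m21 = oo,
   m17 = 4, m76 = 6, all other m_ij = 2. *)
Definition Dpaper : diagram7 := fun i j =>
  let adj (a b : nat) := ((val i == a) && (val j == b)) || ((val i == b) && (val j == a)) in
  if [|| adj 5 4, adj 4 3, adj 2 1 | adj 0 6]%N then Some 4%N
  else if adj 3 2 || adj 6 5 then Some 6%N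
  else if adj 1 0 then None
  else Some 2%N.

(* P_0 is cut out by seven explicit unit normals in R^{4,1}.  In coordinates
   adapted to the ideal vertex v = (0,0,0,1,1), in which s = - <x, v> is the
   horospherical height, each facet inequality is a positive multiple of a
   rational linear inequality.  The Gram matrix is then a computation, two
   facets meet iff an explicit point of the Klein ball lies on both, and the
   closure of P_0 reaches the sphere at infinity only at v.  On a horosphere
   s = c < 1/2 the facets 3 and 7 are inactive and the facets 1, 2, 4, 5, 6 cut
   out a right prism over a (pi/2, pi/4, pi/4)-triangle.  The volume is finite
   since s <= 10 (1 - |y|^2) on the Klein image: the part with
   4^-(n+1) < s <= 4^-n lies in a box of volume O(256^-n) on which the density
   (1 - |y|^2)^(-5/2) is O(32^n), and these bounds sum geometrically.  Finally
   every finite label of D is even, which gives (b). *)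

From mathcomp Require Import all_boot all_order all_algebra.
From mathcomp Require Import all_classical all_reals all_analysis.
From mathcomp Require Import ring lra.
Import Order.TTheory GRing.Theory Num.Theory.
Import numFieldNormedType.Exports.
Set Implicit Arguments. Unset Strict Implicit. Unset Printing Implicit Defensive.
Local Open Scope classical_set_scope.
Local Open Scope ring_scope.

Section Trigonometry.
Variable R : realType.

Let nneg_sqr_inj (x y : R) : 0 <= x -> 0 <= y -> x ^+ 2 = y ^+ 2 -> x = y.
Proof. by move=> x0 y0 /eqP; rewrite eqrXn2 // => /eqP. Qed.

Lemma cos_piquarter : cos (pi / 4%:R) = Num.sqrt 2 / 2 :> R.
Proof.
have pi0 := @pi_gt0 R.
have cpos : 0 < cos (pi / 4%:R) :> R by apply: cos_gt0_pihalf; apply/andP; split; lra.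
have : cos ((pi / 4%:R) *+ 2) = 0 :> R.
  by rewrite -(@cos_pihalf R); congr cos; rewrite mulr2n; field.
rewrite cos_mulr2n mulr2n => c2.
apply: nneg_sqr_inj; rewrite ?ltW ?divr_ge0 ?sqrtr_ge0 //.
by rewrite expr_div_n sqr_sqrtr //; lra.
Qed.

Lemma cos_pisixth : cos (pi / 6%:R) = Num.sqrt 3 / 2 :> R.
Proof.
set x : R := pi / 6%:R.
have pi0 := @pi_gt0 R.
have cpos : 0 < cos x by apply: cos_gt0_pihalf; rewrite /x; apply/andP; split; lra.
have : cos x = (cos x * sin x) *+ 2.
  by rewrite -sin_mulr2n -cosBpihalf -cosN; congr cos; rewrite /x mulr2n; field.
rewrite mulr2n => hx.
have sx : sin x = 1 / 2.
  have /eqP : cos x * (2 * sin x - 1) = 0 by lra.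
  by rewrite mulf_eq0 (gt_eqF cpos) /= => /eqP; lra.
apply: nneg_sqr_inj; rewrite ?ltW ?divr_ge0 ?sqrtr_ge0 //.
by rewrite cos2sin2 sx !expr_div_n sqr_sqrtr //; lra.
Qed.

End Trigonometry.

Lemma image_setI_section (A B : Type) (H P : set A) (Q : set B) (f : A -> B) (g : B -> A) :
  (forall p, H (g p)) -> cancel g f ->
  (forall x, H x -> P x <-> Q (f x)) -> f @` (H `&` P) = Q.
Proof.
move=> Hg gK HPQ; apply/seteqP; split; first by move=> _ [x [Hx /(HPQ x Hx) ?] <-].
by move=> p Qp; exists (g p) => //; split => //; apply/(HPQ _ (Hg p)); rewrite gK.
Qed.

Section Estimates.
Variable R : realType.

Lemma geometric_shell (a s : R) (r : nat) : (1 < r)%N -> 0 < s <= a ->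
  exists n : nat, a / r%:R ^+ n.+1 < s <= a / r%:R ^+ n.
Proof.
move=> r1 /andP[s0 sa].
have r0 : 0 < r%:R :> R by rewrite ltr0n (ltn_trans _ r1).
suff [N aN] : exists N : nat, a / r%:R ^+ N < s.
  elim: N aN => [|N IH] aN; first by rewrite expr0 divr1 in aN; lra.
  have [|sN] := ltrP (a / r%:R ^+ N) s; first exact: IH.
  by exists N; rewrite aN sN.
exists (Num.bound (a / s)).
rewrite ltr_pdivrMr ?exprn_gt0 // mulrC -ltr_pdivrMr //.
apply: lt_le_trans (archi_boundP _) _; first by rewrite divr_ge0 ?ltW // (lt_le_trans s0).
by rewrite -natrX ler_nat ltnW // ltn_expl.
Qed.

Lemma eseries_geometric_lt_pinfty (c r : R) : 0 <= r < 1 ->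
  (\sum_(n <oo) (c * r ^+ n)%:E < +oo)%E.
Proof.
move=> /andP[r0 r1].
have cv : cvgn (series (geometric c r)).
  by apply/cvg_ex; eexists; apply: cvg_geometric_series; rewrite ger0_norm.
have -> : (\sum_(n <oo) (c * r ^+ n)%:E)%E = limn (EFin \o series (geometric c r)).
  by congr (limn _); apply/funext => N /=; rewrite /series /= -sumEFin.
by rewrite EFin_lim // ltry.
Qed.

Lemma inv_sqrt_exp5_le (q T : R) : 0 < T -> 1 / (32 * T ^+ 2) <= q ->
  (Num.sqrt (q ^+ 5))^-1 <= 2 ^+ 13 * T ^+ 5.
Proof.
move=> T0 qge.
have a0 : 0 < 2 ^+ 13 * T ^+ 5 by rewrite mulr_gt0 ?exprn_gt0.
have c0 : 0 < 1 / (32 * T ^+ 2) by rewrite divr_gt0 // mulr_gt0 ?exprn_gt0.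
have q0 : 0 < q := lt_le_trans c0 qge.
have b0 : 0 <= (2 ^+ 13 * T ^+ 5)^-1 by rewrite invr_ge0 ltW.
rewrite -[X in _ <= X]invrK lef_pV2 ?posrE ?invr_gt0 ?sqrtr_gt0 ?exprn_gt0 //.
rewrite -(ger0_norm b0) -sqrtr_sqr ler_sqrt ?exprn_ge0 ?(ltW q0) //.
apply: le_trans (lerXn2r 5 _ _ qge); rewrite ?nnegrE ?(ltW c0) ?(ltW q0) //.
have -> : (1 / (32 * T ^+ 2)) ^+ 5 = (2 ^+ 25 * T ^+ 10)^-1 by field; rewrite gt_eqF.
have -> : (2 ^+ 13 * T ^+ 5)^-1 ^+ 2 = (2 ^+ 26 * T ^+ 10)^-1 by field; rewrite gt_eqF.
rewrite lef_pV2 ?posrE ?mulr_gt0 ?exprn_gt0 // ler_pM2r ?exprn_gt0 // (exprS _ 25).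
by rewrite ler_peMl ?exprn_ge0 // ler1n.
Qed.

End Estimates.

Section Integral.
Local Open Scope ereal_scope.
Context d (T : measurableType d) (R : realType) (mu : {measure set T -> \bar R}).

(* No measurability is required: the integral of a nonnegative function is the
   supremum of the integrals of the simple functions below it. *)
Lemma ge0_le_integralT (f g : T -> \bar R) :
  (forall x, 0 <= f x) -> (forall x, f x <= g x) ->
  \int[mu]_x f x <= \int[mu]_x g x.
Proof.
move=> f0 fg; have g0 x : 0 <= g x := le_trans (f0 x) (fg x).
rewrite !ge0_integralTE //; apply: ereal_sup_le => _ [h hf <-].
by exists h => //= x; exact: le_trans (hf x) (fg x).
Qed.

Lemma integralT_scaled_indic (k : R) (A : set T) : (0 <= k)%R -> measurable A ->
  \int[mu]_x (k * \1_A x)%:E = k%:E * mu A.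
Proof.
move=> k0 mA; rewrite (@integralZl_indic _ _ _ mu setT measurableT (fun=> A) k) //.
  by rewrite integral_indic // setIT.
by rewrite ltNge k0.
Qed.

End Integral.

Section Boxes.
Variable R : realType.

Lemma lebesgue_measure_itv_cc (a b : R) : a <= b ->
  lebesgue_measure [set` `[a, b]] = (b - a)%:E.
Proof.
move=> ab; rewrite lebesgue_measure_itv /= lte_fin.
have [_|ba] := ltP a b; first by rewrite -EFinD.
have -> : b = a by apply/eqP; rewrite eq_le ab ba.
by rewrite subrr.
Qed.

Definition box4 (a b c d e f g h : R) : set (R * R * R * R) :=
  [set` `[a, b]] `*` [set` `[c, d]] `*` [set` `[e, f]] `*` [set` `[g, h]].

Lemma measurable_box4 (a b c d e f g h : R) : measurable (box4 a b c d e f g h).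
Proof. by do 3!apply: measurableX => //. Qed.

Lemma leb4_box4 (a b c d e f g h : R) : a <= b -> c <= d -> e <= f -> g <= h ->
  leb4 (box4 a b c d e f g h) = ((b - a) * (d - c) * (f - e) * (h - g))%:E.
Proof.
move=> ab cd ef gh; rewrite /leb4 /box4.
rewrite product_measure1E; try by do ?apply: measurableX.
transitivity (lebesgue_measure [set` `[a, b]] * lebesgue_measure [set` `[c, d]] *
  lebesgue_measure [set` `[e, f]] * lebesgue_measure [set` `[g, h]])%E.
  congr (_ * _)%E.
  transitivity ((lebesgue_measure \x lebesgue_measure)%E
    ([set` `[a, b]] `*` [set` `[c, d]]) * lebesgue_measure [set` `[e, f]])%E.
    by apply: product_measure1E => //; apply: measurableX.
  by congr (_ * _)%E; apply: product_measure1E.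
by rewrite !lebesgue_measure_itv_cc // -!EFinM.
Qed.

End Boxes.

(** * Lorentzian and cusp coordinates *)

Section Polytope.
Variable R : realType.
Implicit Types (x w f g : 'rV[R]_5) (z s t : R).
Local Notation "x @@ k" := (x ord0 (inord k)) (at level 8).
Local Notation s2 := (Num.sqrt (2 : R)).
Local Notation s3 := (Num.sqrt (3 : R)).

Lemma lorE x w : lor x w =
  x@@0 * w@@0 + x@@1 * w@@1 + x@@2 * w@@2 + x@@3 * w@@3 - x@@4 * w@@4.
Proof.
rewrite /lor (eq_bigr (fun k : 'I_5 =>
  (if val k == 4%N then -1 else 1) * x@@(val k) * w@@(val k))); last first.
  by move=> k _; rewrite inord_val.
rewrite -(big_mkord xpredT (fun k => (if k == 4%N then -1 else 1) * x@@k * w@@k)).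
by rewrite !big_nat_recl // big_geq //=; ring.
Qed.

Lemma lorC x w : lor x w = lor w x.
Proof. by rewrite !lorE; ring. Qed.

Lemma lorZl (a : R) x w : lor (a *: x) w = a * lor x w.
Proof. by rewrite !lorE !mxE; ring. Qed.

Lemma lorDl x x' w : lor (x + x') w = lor x w + lor x' w.
Proof. by rewrite !lorE !mxE; ring. Qed.

Definition row5 (a b c d e : R) : 'rV[R]_5 := \row_(k < 5) nth 0 [:: a; b; c; d; e] k.

Lemma row5E a b c d e : let x := row5 a b c d e in
  [/\ x@@0 = a, x@@1 = b, x@@2 = c, x@@3 = d & x@@4 = e].
Proof. by rewrite /row5 !mxE !inordK. Qed.

Lemma row5_coord x : x = row5 (x@@0) (x@@1) (x@@2) (x@@3) (x@@4).
Proof.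
apply/rowP => -[[|[|[|[|[|k]]]]] Hk] //; rewrite /row5 mxE //=;
  by congr (x _ _); apply/val_inj; rewrite /= inordK.
Qed.

Lemma lor_row5 a b c d e a' b' c' d' e' :
  lor (row5 a b c d e) (row5 a' b' c' d' e') = a * a' + b * b' + c * c' + d * d' - e * e'.
Proof.
rewrite lorE; have [-> -> -> -> ->] := row5E a b c d e.
by have [-> -> -> -> ->] := row5E a' b' c' d' e'.
Qed.

Lemma sqrt2_sqr : s2 ^+ 2 = 2. Proof. exact: sqr_sqrtr. Qed.
Lemma sqrt3_sqr : s3 ^+ 2 = 3. Proof. exact: sqr_sqrtr. Qed.

(* [zscale] is sqrt (2/3); rescaling the third coordinate by it makes all
   facet equations rational in cusp coordinates. *)
Definition zscale : R := s2 * s3 / 3.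

Lemma zscale_gt0 : 0 < zscale.
Proof. by rewrite divr_gt0 // mulr_gt0 ?sqrtr_gt0. Qed.

Lemma zscale_sqr : zscale ^+ 2 = 2 / 3.
Proof. by rewrite /zscale; field: sqrt2_sqr sqrt3_sqr. Qed.

Definition normal (i : 'I_7) : 'rV[R]_5 :=
  match val i with
  | 0 => row5 0 0 (-1) 0 0
  | 1 => row5 0 0 1 zscale zscale
  | 2 => row5 (s3 / 2) 0 0 (- (s3 / 3)) (s3 / 6)
  | 3 => row5 (-1) 0 0 0 0
  | 4 => row5 (s2 / 2) (s2 / 2) 0 (s2 / 2) (s2 / 2)
  | 5 => row5 0 (-1) 0 0 0
  | _ => row5 0 (s3 / 2) (s2 / 2) (- (s3 / 6)) (s3 / 3)
  end.

Lemma lor_normal i : lor (normal i) (normal i) = 1.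
Proof.
by case: i => -[|[|[|[|[|[|[|i]]]]]]] Hi //=; rewrite lor_row5 ?/zscale; field: sqrt2_sqr sqrt3_sqr.
Qed.

(* Cusp coordinates, adapted to the ideal vertex [cusp_vertex] below: the
   horospheres centred at it are the level sets of [s]. *)
Definition cusp y0 y1 z s t : 'rV[R]_5 := row5 y0 y1 (zscale * z) (t - s) t.

Lemma cuspE x : x = cusp (x@@0) (x@@1) (x@@2 / zscale) (x@@4 - x@@3) (x@@4).
Proof.
rewrite {1}[x]row5_coord /cusp mulrC divfK ?gt_eqF ?zscale_gt0 //.
by congr row5; ring.
Qed.

Lemma lor_cusp y0 y1 z s t :
  lor (cusp y0 y1 z s t) (cusp y0 y1 z s t) =
  y0 ^+ 2 + y1 ^+ 2 + 2 / 3 * z ^+ 2 + s ^+ 2 - 2 * t * s.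
Proof. by rewrite /cusp lor_row5 -zscale_sqr; ring. Qed.

Definition cusp_vertex : 'rV[R]_5 := cusp 0 0 0 0 1.

Lemma lor_cusp_vertex y0 y1 z s t : lor (cusp y0 y1 z s t) cusp_vertex = - s.
Proof. by rewrite lor_row5; ring. Qed.

Lemma ideal_bdry_cusp_vertex : ideal_bdry cusp_vertex.
Proof.
split; first by rewrite lor_cusp_vertex oppr0.
by have [_ _ _ _ ->] := row5E 0 0 (zscale * 0) (1 - 0) (1 : R); exact: ltr01.
Qed.

Definition facet_scale (i : 'I_7) : R :=
  match val i with
  | 0 | 1 => zscale | 2 | 6 => s3 / 6 | 4 => s2 / 2 | _ => 1
  end.

Definition facet_form (i : 'I_7) y0 y1 z s t : R :=
  match val i with
  | 0 => - z
  | 1 => z - s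
  | 2 => 3 * y0 + 2 * s - 3 * t
  | 3 => - y0
  | 4 => y0 + y1 - s
  | 5 => - y1
  | _ => 3 * y1 + 2 * z + s - 3 * t
  end.

Lemma facet_scale_gt0 i : 0 < facet_scale i.
Proof.
have := zscale_gt0; have : 0 < s2 by rewrite sqrtr_gt0.
have : 0 < s3 by rewrite sqrtr_gt0.
by rewrite /facet_scale; case: (val i) => [|[|[|[|[|[|[|?]]]]]]] /=; lra.
Qed.

Lemma lor_cusp_normal i y0 y1 z s t :
  lor (cusp y0 y1 z s t) (normal i) = facet_scale i * facet_form i y0 y1 z s t.
Proof.
rewrite /cusp /normal /facet_scale /facet_form.
by case: i => -[|[|[|[|[|[|[|i]]]]]]] Hi //=; rewrite lor_row5 ?/zscale; field: sqrt2_sqr sqrt3_sqr.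
Qed.

Lemma le0_lor_cusp_normal i y0 y1 z s t :
  (lor (cusp y0 y1 z s t) (normal i) <= 0) = (facet_form i y0 y1 z s t <= 0).
Proof. by rewrite lor_cusp_normal pmulr_rle0 ?facet_scale_gt0. Qed.

Lemma lt0_lor_cusp_normal i y0 y1 z s t :
  (lor (cusp y0 y1 z s t) (normal i) < 0) = (facet_form i y0 y1 z s t < 0).
Proof. by rewrite lor_cusp_normal pmulr_rlt0 ?facet_scale_gt0. Qed.

Lemma lor_cusp_normal_eq0 i y0 y1 z s t :
  (lor (cusp y0 y1 z s t) (normal i) == 0) = (facet_form i y0 y1 z s t == 0).
Proof. by rewrite lor_cusp_normal mulf_eq0 gt_eqF ?facet_scale_gt0. Qed.

Definition klein_defect y0 y1 z s : R :=
  2 * s - s ^+ 2 - y0 ^+ 2 - y1 ^+ 2 - 2 / 3 * z ^+ 2.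

Lemma lor_cusp1 y0 y1 z s :
  lor (cusp y0 y1 z s 1) (cusp y0 y1 z s 1) = - klein_defect y0 y1 z s.
Proof. by rewrite lor_cusp /klein_defect; ring. Qed.

Definition klein_point y0 y1 z s : 'rV[R]_5 :=
  (Num.sqrt (klein_defect y0 y1 z s))^-1 *: cusp y0 y1 z s 1.

Section KleinPoint.
Variables y0 y1 z s : R.
Hypothesis defect_gt0 : 0 < klein_defect y0 y1 z s.

Let sqrt_defect_gt0 : 0 < Num.sqrt (klein_defect y0 y1 z s).
Proof. by rewrite sqrtr_gt0. Qed.

Lemma klein_point_H4 : H4 (klein_point y0 y1 z s).
Proof.
split.
  rewrite lorZl lorC lorZl lor_cusp1 mulrA -expr2 exprVn sqr_sqrtr ?ltW //.
  by rewrite mulrN mulVf ?gt_eqF.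
by rewrite mxE; have [_ _ _ _ ->] := row5E y0 y1 (zscale * z) (1 - s) 1; rewrite mulr1 invr_gt0.
Qed.

Lemma lor_klein_point_lt0 i :
  (lor (klein_point y0 y1 z s) (normal i) < 0) = (facet_form i y0 y1 z s 1 < 0).
Proof. by rewrite lorZl pmulr_rlt0 ?invr_gt0 // lt0_lor_cusp_normal. Qed.

Lemma lor_klein_point_eq0 i :
  (lor (klein_point y0 y1 z s) (normal i) == 0) = (facet_form i y0 y1 z s 1 == 0).
Proof. by rewrite lorZl mulf_eq0 invr_eq0 gt_eqF //= lor_cusp_normal_eq0. Qed.

Lemma hyps_meet_klein i j : facet_form i y0 y1 z s 1 = 0 -> facet_form j y0 y1 z s 1 = 0 ->
  hyps_meet (normal i) (normal j).
Proof.
move=> /eqP hi /eqP hj; exists (klein_point y0 y1 z s); split; first exact: klein_point_H4.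
by split; apply/eqP; rewrite lor_klein_point_eq0.
Qed.

End KleinPoint.

(** * Facets and dihedral angles *)

Lemma hyps_meetC f g : hyps_meet f g -> hyps_meet g f.
Proof. by move=> [x [? [? ?]]]; exists x. Qed.

Lemma tangent_at_infinityC f g : tangent_at_infinity f g -> tangent_at_infinity g f.
Proof. by move=> [fg [v [? [? ?]]]]; split; [move/hyps_meetC | exists v]. Qed.

(* Each candidate point of the Klein ball lies on two facet hyperplanes; every
   pair of facets with a finite label shares one of them. *)
Local Ltac meet_at y0 y1 z s :=
  apply: (@hyps_meet_klein y0 y1 z s); rewrite ?/klein_defect ?/facet_form /=; lra.
Local Ltac meet_somewhere := first
  [ meet_at (1/3 : R) (0 : R) (0 : R) (1 : R) | meet_at (0 : R) (0 : R) (0 : R) (1 : R)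
  | meet_at (1/2 : R) (1/2 : R) (0 : R) (1 : R) | meet_at (0 : R) (2/3 : R) (0 : R) (1 : R)
  | meet_at (1/3 : R) (0 : R) (1 : R) (1 : R) | meet_at (0 : R) (0 : R) (1 : R) (1 : R)
  | meet_at (1/4 : R) (1/4 : R) (1/2 : R) (1/2 : R) | meet_at (0 : R) (1/2 : R) (1/2 : R) (1/2 : R)
  | meet_at (0 : R) (0 : R) (0 : R) (3/2 : R) | meet_at (1/3 : R) (2/3 : R) (0 : R) (1 : R)
  | meet_at (0 : R) (1/2 : R) (0 : R) (1/2 : R) | meet_at (1/2 : R) (0 : R) (0 : R) (1/2 : R) ].

Lemma hyps_meet_normal i j : i != j -> Dpaper i j != None -> hyps_meet (normal i) (normal j).
Proof.
case: i => -[|[|[|[|[|[|[|i]]]]]]] Hi //; case: j => -[|[|[|[|[|[|[|j]]]]]]] Hj //= _ _.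
all: meet_somewhere.
Qed.

Lemma tangent_normal i j : val i = 0%N -> val j = 1%N -> tangent_at_infinity (normal i) (normal j).
Proof.
move=> i0 j1; split.
  move=> [x [[xx _] [/eqP xi /eqP xj]]]; move: xx xi xj.
  rewrite (cuspE x) lor_cusp !lor_cusp_normal_eq0 /facet_form i0 j1 /= => xx.
  move=> /eqP z0 /eqP zs; have s0 : x@@4 - x@@3 = 0 by lra.
  have z0' : x@@2 / zscale = 0 by lra.
  by move: xx; rewrite s0 z0'; nra.
exists cusp_vertex; split; first exact: ideal_bdry_cusp_vertex.
by rewrite !lor_cusp_normal /facet_form i0 j1 /=; split; ring.
Qed.

Lemma lor_normal_cos i j m : i != j -> Dpaper i j = Some m ->
  lor (normal i) (normal j) = - cos (pi / m%:R).
Proof.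
case: i => -[|[|[|[|[|[|[|i]]]]]]] Hi //; case: j => -[|[|[|[|[|[|[|j]]]]]]] Hj //= _ [<-].
all: rewrite ?cos_pihalf ?cos_piquarter ?cos_pisixth lor_row5 ?/zscale.
all: by field: sqrt2_sqr sqrt3_sqr.
Qed.

Lemma normal_dihedral i j : i != j ->
  match Dpaper i j with
  | Some m => meet_at_angle (normal i) (normal j) (pi / m%:R)
  | None => tangent_at_infinity (normal i) (normal j)
  end.
Proof.
move=> ij; case hD: (Dpaper i j) => [m|].
  by split; [apply: hyps_meet_normal; rewrite ?hD | exact: lor_normal_cos].
move: ij hD; case: i => -[|[|[|[|[|[|[|i]]]]]]] Hi //;
  case: j => -[|[|[|[|[|[|[|j]]]]]]] Hj //= _ _.
  exact: tangent_normal.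
exact/tangent_at_infinityC/tangent_normal.
Qed.

Lemma facet_point_klein y0 y1 z s i : 0 < klein_defect y0 y1 z s ->
  facet_form i y0 y1 z s 1 = 0 -> (forall j, j != i -> facet_form j y0 y1 z s 1 < 0) ->
  exists x, H4 x /\ lor x (normal i) = 0 /\ forall j, j != i -> lor x (normal j) < 0.
Proof.
move=> d0 /eqP fi fj; exists (klein_point y0 y1 z s); split; first exact: klein_point_H4.
split; first by apply/eqP; rewrite lor_klein_point_eq0.
by move=> j ji; rewrite lor_klein_point_lt0 // fj.
Qed.

Local Ltac facet_at y0 y1 z s :=
  apply: (@facet_point_klein y0 y1 z s); rewrite ?/klein_defect ?/facet_form /=;
  [lra | lra | by case=> -[|[|[|[|[|[|[|j]]]]]]] Hj //= _; lra].

Lemma irredundant_normal : irredundant_polytope normal.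
Proof.
split.
  exists (klein_point (1/8) (1/8) (1/4) (1/2)).
  have d0 : 0 < klein_defect (1/8) (1/8) (1/4) (1/2) :> R by rewrite /klein_defect; lra.
  split=> [|i]; first exact: klein_point_H4.
  by rewrite lor_klein_point_lt0 // /facet_form; case: i => -[|[|[|[|[|[|[|i]]]]]]] Hi //=; lra.
case=> -[|[|[|[|[|[|[|i]]]]]]] Hi //.
- by facet_at (1/8 : R) (1/8 : R) (0 : R) (1/2 : R).
- by facet_at (1/8 : R) (1/8 : R) (1/2 : R) (1/2 : R).
- by facet_at (1/2 : R) (1/8 : R) (1/4 : R) (3/4 : R).
- by facet_at (0 : R) (1/8 : R) (1/4 : R) (1/2 : R).
- by facet_at (1/4 : R) (1/4 : R) (1/4 : R) (1/2 : R).
- by facet_at (1/8 : R) (0 : R) (1/4 : R) (1/2 : R).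
- by facet_at (1/10 : R) (1/3 : R) (1/2 : R) (1 : R).
Qed.

Lemma coxeter_normal : coxeter_polytope_with_diagram normal Dpaper.
Proof.
by split; [exact: lor_normal | split; [exact: irredundant_normal | exact: normal_dihedral]].
Qed.

Lemma Dpaper_finite_label i j m : Dpaper i j = Some m -> m \in [:: 2; 4; 6]%N.
Proof.
rewrite /Dpaper; case: ifP => _; first by case=> <-.
case: ifP => _; first by case=> <-.
by case: ifP => // _ [<-].
Qed.

(* Every finite label of [Dpaper] is even. *)
Lemma even_angles_normal : even_angles_bounded_unbounded normal.
Proof.
move=> i j bi nbj [x [[[Hx _] xi] [_ xj]]].
have ij : i != j by apply/eqP => eij; apply: nbj; rewrite -eij.
move: (normal_dihedral ij); case hD: (Dpaper i j) => [m|]; last first.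
  by case=> nm _; exfalso; apply: nm; exists x.
move: (Dpaper_finite_label hD); rewrite !inE => /or3P[] /eqP-> ?.
- by exists 1%N.
- by exists 2%N.
- by exists 3%N.
Qed.

(** * Finite volume *)

Lemma polytope_cusp_ineqs y0 y1 z s t :
  (forall i, lor (cusp y0 y1 z s t) (normal i) <= 0) ->
  [/\ 0 <= y0, 0 <= y1, 0 <= z, z <= s &
   [/\ y0 + y1 <= s, 3 * y0 + 2 * s <= 3 * t & 3 * y1 + 2 * z + s <= 3 * t]].
Proof.
move=> le0; have F i : facet_form i y0 y1 z s t <= 0 by rewrite -le0_lor_cusp_normal.
move: (F (inord 0)) (F (inord 1)) (F (inord 2)) (F (inord 3)) (F (inord 4)) (F (inord 5))
  (F (inord 6)); rewrite /facet_form /= !inordK //= => *.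
by split; try lra; split; lra.
Qed.

(* Near the ideal vertex the polytope stays away from the sphere at infinity
   linearly in the horospherical height [s]; this is why the volume is finite. *)
Lemma klein_defect_ge y0 y1 z s :
  0 <= y0 -> 0 <= y1 -> 0 <= z -> y0 + y1 <= s -> z <= s ->
  3 * y0 + 2 * s <= 3 -> 3 * y1 + 2 * z + s <= 3 ->
  s <= 10 * klein_defect y0 y1 z s.
Proof. rewrite /klein_defect => *. nra. Qed.

Lemma zscale_lt1 : zscale < 1.
Proof. by move: zscale_sqr zscale_gt0 => h2 h0; nra. Qed.

Lemma klein_liftE (p : R * R * R * R) :
  klein_lift p = cusp p.1.1.1 p.1.1.2 (p.1.2 / zscale) (1 - p.2) 1.
Proof.
apply/rowP => -[[|[|[|[|[|k]]]]] Hk] //; rewrite /klein_lift /cusp /row5 !mxE //=.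
  by rewrite mulrC divfK // gt_eqF // zscale_gt0.
by ring.
Qed.

Definition shell_box (n : nat) : set (R * R * R * R) :=
  let w := 2 ^- (2 * n) in
  box4 0 (2 * w) 0 (2 * w) 0 (2 * w) (1 - 2 * w) (1 - w / 2).

Definition shell_bound (n : nat) : R := 2 ^+ 13 * 2 ^+ (5 * n).

Definition shell_fun (n : nat) (p : R * R * R * R) : \bar R :=
  (shell_bound n * \1_(shell_box n) p)%:E.

Lemma shell_fun_ge0 n p : (0 <= shell_fun n p)%E.
Proof. by rewrite lee_fin mulr_ge0 ?indicE ?ler0n // mulr_ge0 ?exprn_ge0. Qed.

Lemma integral_shell_fun n :
  (\int[@leb4 R]_p shell_fun n p = (12 * 2 ^+ 13 * (1 / 8) ^+ n)%:E)%E.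
Proof.
have w0 : 0 < 2 ^- (2 * n) :> R by rewrite invr_gt0 exprn_gt0.
transitivity ((shell_bound n)%:E * leb4 (shell_box n))%E.
  by apply: integralT_scaled_indic; [rewrite mulr_ge0 ?exprn_ge0 | exact: measurable_box4].
rewrite /shell_box /= leb4_box4 -?EFinM; [congr EFin; rewrite /shell_bound | lra..].
have -> : (1 / 8 : R) ^+ n = (2 ^+ n) ^- 3.
  by rewrite -exprM mulnC exprM -exprVn div1r; congr (_ ^-1 ^+ n); rewrite !exprS expr0; ring.
rewrite (mulnC 5) (mulnC 2) !exprM; have t0 : (2 : R) ^+ n != 0 by rewrite expf_neq0.
by field; rewrite ?expf_neq0.
Qed.

Lemma klein_set_shell p : klein_set normal p ->
  exists n, shell_box n p /\ klein_density p <= shell_bound n.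
Proof.
move=> [d0 le0]; move: d0 le0; rewrite /klein_density klein_liftE lor_cusp1 opprK oppr_lt0.
have zp : p.1.2 = zscale * (p.1.2 / zscale) by rewrite mulrC divfK ?gt_eqF ?zscale_gt0.
have p2 : p.2 = 1 - (1 - p.2) by ring.
move: zp p2; set y0 := p.1.1.1; set y1 := p.1.1.2; set z := p.1.2 / zscale.
set s := 1 - p.2 => zp p2 d0 le0.
have [y00 y10 z0 zs [ys y0s y1s]] := polytope_cusp_ineqs le0.
have ds : s <= 10 * klein_defect y0 y1 z s by apply: klein_defect_ge; lra.
have s0 : 0 < s by move: d0; rewrite /klein_defect; nra.
have s2 : 0 < s <= 2 by apply/andP; split; lra.
have [n /andP[sn1 sn2]] := @geometric_shell _ 2 s 4 isT s2.
have e4 k : (4%:R : R) ^+ k = 2 ^+ (2 * k) by rewrite exprM; congr (_ ^+ _); rewrite -natrX.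
set w : R := 2 ^- (2 * n).
have w0 : 0 < w by rewrite invr_gt0 exprn_gt0.
have ws : w / 2 < s.
  suff <- : 2 / 2 ^+ (2 * n.+1) = w / 2 by rewrite -e4.
  by rewrite mulnS exprD /w; field; rewrite gt_eqF ?exprn_gt0.
move: sn2; rewrite e4 -/(2 / 2 ^+ (2 * n)) -/w => sw.
exists n; split.
  have zsz : zscale * z <= z by rewrite ler_piMl // ltW // zscale_lt1.
  have zz0 : 0 <= zscale * z by apply: mulr_ge0 => //; exact: ltW zscale_gt0.
  rewrite /shell_box /box4 /= !in_itv /= zp p2 -/y0 -/y1 -/w.
  by split; [split; [split|]|]; apply/andP; split; lra.
rewrite /shell_bound (mulnC 5) exprM; apply: inv_sqrt_exp5_le; first by rewrite exprn_gt0.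
have -> : 1 / (32 * (2 ^+ n) ^+ 2) = w / 32 :> R.
  by rewrite /w -exprM mulnC; field; rewrite gt_eqF ?exprn_gt0.
lra.
Qed.

Lemma finite_volume_normal : finite_volume normal.
Proof.
rewrite /finite_volume /hvolume integral_mkcond.
have sum_ge0 p : (0 <= \sum_(n <oo) shell_fun n p)%E.
  by apply: nneseries_ge0 => n _ _; exact: shell_fun_ge0.
apply: (le_lt_trans (ge0_le_integralT (@leb4 R)
  (g := fun p => (\sum_(n <oo) shell_fun n p)%E) _ _)).
- by move=> p; rewrite /patch; case: ifP => // _; rewrite lee_fin invr_ge0 sqrtr_ge0.
- move=> p; rewrite /patch; case: ifPn => [/set_mem /klein_set_shell [n [pn dn]]|_] //.
  apply: (@le_trans _ _ (shell_fun n p)).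
    by rewrite /shell_fun indicE mem_set // mulr1 lee_fin.
  apply: le_trans (nneseries_lim_ge n.+1 _); last by move=> i _ _; exact: shell_fun_ge0.
  rewrite big_nat_recr //= leeDr //; apply: sume_ge0 => i _; exact: shell_fun_ge0.
rewrite integral_nneseries //.
- under eq_eseriesr do rewrite integral_shell_fun.
  by apply: eseries_geometric_lt_pinfty; apply/andP; split; lra.
- move=> n; apply/measurable_realfun.measurable_EFinP.
  apply: measurable_realfun.measurable_funM; first exact: measurable_cst.
  by apply: measurable_realfun.measurable_indic; exact: measurable_box4.
- by move=> n p _; exact: shell_fun_ge0.
Qed.

(** * The ideal vertex and its horospherical link *)

Lemma klein_closureP x : klein_closure normal x ->
  exists y0 y1 z s, [/\ x = cusp y0 y1 z s 1, 0 <= klein_defect y0 y1 z s &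
                        forall i, lor (cusp y0 y1 z s 1) (normal i) <= 0].
Proof.
move=> [x4 [xx le0]]; exists (x@@0), (x@@1), (x@@2 / zscale), (1 - x@@3).
have ex : x = cusp (x@@0) (x@@1) (x@@2 / zscale) (1 - x@@3) 1 by rewrite {1}[x]cuspE x4.
by split=> //; rewrite -?ex // -oppr_le0 -lor_cusp1 -ex.
Qed.

Lemma klein_closure_height x : klein_closure normal x ->
  lor x cusp_vertex <= 0 /\ (lor x cusp_vertex = 0 -> x = cusp_vertex).
Proof.
move=> /klein_closureP[y0 [y1 [z [s [-> _ /polytope_cusp_ineqs[? ? ? ? [? ? ?]]]]]]].
rewrite lor_cusp_vertex; split=> [|/eqP]; first lra.
rewrite oppr_eq0 => /eqP s0; rewrite /cusp_vertex s0.
by have [-> -> ->] : [/\ y0 = 0, y1 = 0 & z = 0] by split; lra.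
Qed.

Lemma klein_closure_cusp_vertex : klein_closure normal cusp_vertex.
Proof.
split; first by have [_ _ _ _ ->] := row5E 0 0 (zscale * 0) (1 - 0) (1 : R).
split; first by rewrite (proj1 ideal_bdry_cusp_vertex).
by move=> i; rewrite le0_lor_cusp_normal /facet_form; case: (val i) => [|[|[|[|[|[|?]]]]]] /=; lra.
Qed.

Lemma ideal_vertex_cusp_vertex : ideal_vertex normal cusp_vertex.
Proof.
split; first exact: klein_closure_cusp_vertex.
split=> [|a b t ca cb /andP[t0 t1] vab]; first exact: (proj1 ideal_bdry_cusp_vertex).
have := congr1 (fun y => lor y cusp_vertex) vab; rewrite /= lorDl !lorZl lor_cusp_vertex oppr0.
have [[la ea] [lb eb]] := (klein_closure_height ca, klein_closure_height cb) => h.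
have la0 : lor a cusp_vertex = 0 by nra.
have lb0 : lor b cusp_vertex = 0 by nra.
by rewrite (ea la0) (eb lb0).
Qed.

Lemma ideal_vertex_unique w : ideal_vertex normal w -> w = cusp_vertex.
Proof.
move=> [cw [ww _]]; apply: (klein_closure_height cw).2.
have [y0 [y1 [z [s [ew d0 /polytope_cusp_ineqs[? ? ? ? [? ? ?]]]]]]] := klein_closureP cw.
have d00 : klein_defect y0 y1 z s = 0 by rewrite -[LHS]opprK -lor_cusp1 -ew ww oppr0.
have : s <= 10 * klein_defect y0 y1 z s by apply: klein_defect_ge; lra.
by rewrite ew lor_cusp_vertex d00; lra.
Qed.

Lemma horosphere_cusp c x : horosphere cusp_vertex c x ->
  [/\ x = cusp (x@@0) (x@@1) (x@@2 / zscale) c (x@@4), x@@3 = x@@4 - c, 0 < x@@4 &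
       2 * x@@4 * c = 1 + c ^+ 2 + x@@0 ^+ 2 + x@@1 ^+ 2 + x@@2 ^+ 2].
Proof.
move=> [[xx x4] xv]; rewrite [x]cuspE lor_cusp_vertex in xv.
have ex : x = cusp (x@@0) (x@@1) (x@@2 / zscale) c (x@@4).
  by rewrite {1}[x]cuspE; congr cusp; lra.
split=> //; first lra.
move: xx; rewrite {1 2}ex lor_cusp expr_div_n zscale_sqr.
have -> : 2 / 3 * (x@@2 ^+ 2 / (2 / 3)) = x@@2 ^+ 2 :> R by field.
lra.
Qed.

Definition row3 (a b c : R) : 'rV[R]_3 := \row_(k < 3) nth 0 [:: a; b; c] k.

Lemma row3E a b c : [/\ c0 (row3 a b c) = a, c1 (row3 a b c) = b & c2 (row3 a b c) = c].
Proof. by rewrite /c0 /c1 /c2 /row3 !mxE !inordK. Qed.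

Definition horo_chart x : 'rV[R]_3 := row3 (x@@0) (x@@1) (x@@2).

Lemma horo_chartE x :
  [/\ c0 (horo_chart x) = x@@0, c1 (horo_chart x) = x@@1 & c2 (horo_chart x) = x@@2].
Proof. exact: row3E. Qed.

(* The time coordinate forced by the horosphere equation [2 t c = 1 + c^2 + |p|^2]. *)
Definition horo_time c (p : 'rV[R]_3) : R :=
  (1 + c ^+ 2 + c0 p ^+ 2 + c1 p ^+ 2 + c2 p ^+ 2) / (2 * c).

Definition horo_lift c (p : 'rV[R]_3) : 'rV[R]_5 :=
  row5 (c0 p) (c1 p) (c2 p) (horo_time c p - c) (horo_time c p).

Lemma horo_liftK c : cancel (horo_lift c) horo_chart.
Proof.
move=> p; apply/rowP => k; rewrite /horo_chart /horo_lift /row3 mxE.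
have [-> -> -> _ _] := row5E (c0 p) (c1 p) (c2 p) (horo_time c p - c) (horo_time c p).
rewrite /c0 /c1 /c2; case: k => -[|[|[|k]]] Hk //=.
all: by congr (p _ _); apply/val_inj; rewrite /= inordK.
Qed.

Lemma horo_lift_horosphere c p : 0 < c -> horosphere cusp_vertex c (horo_lift c p).
Proof.
move=> c0p; rewrite /horo_lift; set t := horo_time c p.
have ct : 2 * c * t = 1 + c ^+ 2 + c0 p ^+ 2 + c1 p ^+ 2 + c2 p ^+ 2.
  by rewrite /t /horo_time; field; rewrite gt_eqF.
have t0 : 0 < t.
  by move: (sqr_ge0 c) (sqr_ge0 (c0 p)) (sqr_ge0 (c1 p)) (sqr_ge0 (c2 p)) => *; nra.
split; last by rewrite /cusp_vertex /cusp lor_row5; ring.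
split; last by have [_ _ _ _ ->] := row5E (c0 p) (c1 p) (c2 p) (t - c) t.
by rewrite lor_row5; nra.
Qed.

Lemma horo_chart_isometry c x w : horosphere cusp_vertex c x -> horosphere cusp_vertex c w ->
  edist3 (horo_chart x) (horo_chart w) = horo_dist x w.
Proof.
move=> /horosphere_cusp[_ x3 _ _] /horosphere_cusp[_ w3 _ _].
rewrite /edist3 /horo_dist lorE !mxE x3 w3 !big_ord_recl big_ord0 /horo_chart /row3 !mxE /=.
by congr Num.sqrt; ring.
Qed.

Lemma horosphere_hpoly c x : 0 < c < 1 / 2 -> horosphere cusp_vertex c x ->
  (hpoly normal x <-> prism c (zscale * c) (horo_chart x)) /\
  (hpoly normal x -> lor x (normal (inord 2)) < 0 /\ lor x (normal (inord 6)) < 0).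
Proof.
move=> /andP[c0 c1] hx; have [ex _ x4 xc] := horosphere_cusp hx.
have t1 : 1 < x@@4 by move: (sqr_ge0 (x@@0)) (sqr_ge0 (x@@1)) (sqr_ge0 (x@@2)) => *; nra.
have zs := zscale_gt0.
have xz : x@@2 = zscale * (x@@2 / zscale) by rewrite mulrC divfK ?gt_eqF.
have [e0 e1 e2] := horo_chartE x.
rewrite /hpoly /prism /= e0 e1 e2; split.
  split=> [[_ le0]|[a0 [b0 [ab /andP[z0 zc]]]]].
    rewrite ex in le0; have [? ? ? ? [? ? ?]] := polytope_cusp_ineqs le0.
    by rewrite xz; do 3!split=> //; apply/andP; split; nra.
  have z0' : 0 <= x@@2 / zscale := divr_ge0 z0 (ltW zs).
  have zc' : x@@2 / zscale <= c by rewrite ler_pdivrMr // mulrC.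
  split=> [|i]; first by case: hx.
  by rewrite ex le0_lor_cusp_normal /facet_form; case: (val i) => [|[|[|[|[|[|?]]]]]] /=; lra.
move=> [_ le0]; rewrite ex in le0; have [? ? ? ? [? ? ?]] := polytope_cusp_ineqs le0.
by rewrite ex !lt0_lor_cusp_normal /facet_form /= !inordK //=; split; lra.
Qed.

Lemma horosphere_facet c x i : horosphere cusp_vertex c x ->
  facet normal i x <-> hpoly normal x /\ facet_form i (x@@0) (x@@1) (x@@2 / zscale) c (x@@4) = 0.
Proof.
move=> /horosphere_cusp[ex _ _ _]; rewrite /facet /= {2}ex.
by split=> -[px /eqP fx]; split=> //; apply/eqP; move: fx; rewrite lor_cusp_normal_eq0.
Qed.

Section HorosphereChart.
Variable c : R.
Hypothesis c_range : 0 < c < 1 / 2.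

Let c_gt0 : 0 < c. Proof. by case/andP: c_range. Qed.

Let lifted p : horosphere cusp_vertex c (horo_lift c p) := horo_lift_horosphere p c_gt0.

Lemma horo_chart_surj : horo_chart @` horosphere cusp_vertex c = setT.
Proof.
by apply/seteqP; split=> // p _; exists (horo_lift c p); [exact: lifted | exact: horo_liftK].
Qed.

Lemma horo_chart_hpoly :
  horo_chart @` (horosphere cusp_vertex c `&` hpoly normal) = prism c (zscale * c).
Proof.
apply: (image_setI_section lifted (horo_liftK c)) => x hx.
exact: (horosphere_hpoly c_range hx).1.
Qed.

Lemma horo_chart_facet i (Q : set 'rV[R]_3) :
  (forall x, horosphere cusp_vertex c x -> hpoly normal x ->
     facet_form i (x@@0) (x@@1) (x@@2 / zscale) c (x@@4) = 0 <-> Q (horo_chart x)) ->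
  horo_chart @` (horosphere cusp_vertex c `&` facet normal i) = prism c (zscale * c) `&` Q.
Proof.
move=> FQ; apply: (image_setI_section lifted (horo_liftK c)) => x hx.
have [hP _] := horosphere_hpoly c_range hx.
have fE := horosphere_facet i hx; split=> [/fE[px fx]|[px qx]].
  by split; [exact/hP | exact/(FQ x hx px)].
by have px' := iffRL hP px; apply/fE; split=> //; exact/(FQ x hx px').
Qed.

Lemma horosphere_facet_empty i :
  (forall x, horosphere cusp_vertex c x -> hpoly normal x -> lor x (normal i) < 0) ->
  horosphere cusp_vertex c `&` facet normal i = set0.
Proof. by move=> lt0; apply/seteqP; split=> // x [hx [px fx]]; have := lt0 x hx px; lra. Qed.

End HorosphereChart.

Lemma link_is_prism_cusp_vertex : link_is_prism normal cusp_vertex.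
Proof.
exists (1 / 2); split=> [|c c_range]; first lra.
have [c0 zs] : 0 < c /\ 0 < zscale by split; [case/andP: c_range | exact: zscale_gt0].
have xz x : x@@2 = zscale * (x@@2 / zscale) by rewrite mulrC divfK ?gt_eqF.
exists horo_chart, c, (zscale * c); split; first by split; rewrite ?mulr_gt0.
split; first exact: horo_chart_isometry.
split; first exact: horo_chart_surj.
split; first exact: horo_chart_hpoly.
split.
  apply: horo_chart_facet => // x _ _; have [e0 e1 e2] := horo_chartE x.
  by rewrite /= e2 /facet_form /= inordK //= {2}xz; split=> h; nra.
split.
  apply: horo_chart_facet => // x _ _; have [e0 e1 e2] := horo_chartE x.
  by rewrite /= e2 /facet_form /= inordK //= {2}xz; split=> h; nra.
split.
  apply: horo_chart_facet => // x _ _; have [e0 e1 e2] := horo_chartE x.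
  by rewrite /= e0 /facet_form /= inordK //=; split=> h; lra.
split.
  apply: horo_chart_facet => // x _ _; have [e0 e1 e2] := horo_chartE x.
  by rewrite /= e1 /facet_form /= inordK //=; split=> h; lra.
split.
  apply: horo_chart_facet => // x _ _; have [e0 e1 e2] := horo_chartE x.
  by rewrite /= e0 e1 /facet_form /= inordK //=; split=> h; lra.
by split; apply: horosphere_facet_empty => // x hx /(horosphere_hpoly c_range hx).2[].
Qed.

End Polytope.

Theorem proposition3p1 (R : realType) :
  exists e : 'I_7 -> 'rV[R]_5,
    [/\ coxeter_polytope_with_diagram e Dpaper,
        finite_volume e,
        (exists v, [/\ ideal_vertex e v,
                       (forall w, ideal_vertex e w -> w = v) &
                       link_is_prism e v]) &
        even_angles_bounded_unbounded e].
Proof.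
exists (normal R); split.
- exact: coxeter_normal.
- exact: finite_volume_normal.
- exists (cusp_vertex R); split.
  + exact: ideal_vertex_cusp_vertex.
  + exact: ideal_vertex_unique.
  + exact: link_is_prism_cusp_vertex.
- exact: even_angles_normal.
Qed.
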